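(* Let $\beta\in(-\infty,0)\cup(0,1]$, $G_\beta(u)=\frac{\beta}{|\beta|}u^\beta$, and $u_0\in\ell^\infty_+(\mathbb{Z})$ with $0<\delta\le u_0\le C$. Then there exists a solution $u:[0,\infty)\to\ell^\infty_+(\mathbb{Z})$ of $\partial_tu=\Delta G_\beta(u)$, $u(0)=u_0$, with $\delta\le u(t,\cdot)\le C$ for all $t\ge0$.
   Context: $\Delta v(k)=v(k-1)-2v(k)+v(k+1)$. A solution is a map $u\in C^0([0,\infty);\ell^\infty_+(\mathbb{Z}))$ with $u(0)=u_0$ such that for each $k$, $u(\cdot,k)\in C^1((0,\infty);(0,\infty))$ and $\frac{d}{dt}u(t,k)=\Delta G_\beta(u)(t,k)$ for all $t>0$. *)

From Stdlib Require Import Reals ZArith.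
From Coquelicot Require Import Coquelicot.
Open Scope R_scope.

Definition linf_plus (v : Z -> R) : Prop :=
  (forall k, 0 <= v k) /\ exists M, forall k, Rabs (v k) <= M.

Definition dlap (v : Z -> R) (k : Z) : R :=
  v (k - 1)%Z - 2 * v k + v (k + 1)%Z.

Definition G (beta x : R) : R := (beta / Rabs beta) * Rpower x beta.

Definition cont_linf_at (u : R -> Z -> R) (t0 : R) : Prop :=
  forall eps, 0 < eps -> exists d, 0 < d /\
    forall t, 0 <= t -> Rabs (t - t0) < d ->
      forall k, Rabs (u t k - u t0 k) <= eps.

Definition is_solution (beta : R) (u0 : Z -> R) (u : R -> Z -> R) : Prop :=
  (forall t, 0 <= t -> linf_plus (u t)) /\
  (forall t0, 0 <= t0 -> cont_linf_at u t0) /\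
  u 0 = u0 /\
  (forall k t, 0 < t ->
     0 < u t k /\
     is_derive (fun s => u s k) t (dlap (fun j => G beta (u t j)) k) /\
     continuous (fun s => Derive (fun s' => u s' k) s) t).

(* Clamping G_beta to [delta, C] gives a nonlinearity F that is nondecreasing
   and M-Lipschitz with M = |beta| delta^(beta - 1); this is where beta <= 1 is
   used.  Writing Delta F(u) = -2M u + H(u), the operator H is order preserving,
   sends the constant c to 2Mc and is 6M-Lipschitz in the sup norm.  Hence the
   Duhamel map u |-> e^(-2Mt) (u0 + int_0^t e^(2Ms) H(u(s)) ds) preserves the
   order interval [delta, C] and halves distances in the weighted norm
   sup_t e^(-10Mt) |u(t)|_oo.  Its Picard iterates converge to a fixed point,
   which solves the clamped equation with values in [delta, C], where the clamp
   is the identity. *)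

From Stdlib Require Import Reals ZArith Lra Lia FunctionalExtensionality.
From Coquelicot Require Import Coquelicot.
Open Scope R_scope.

Lemma continuous_of_derive (f : R -> R) (x l : R) : is_derive f x l -> continuous f x.
Proof.
  intros Hf. apply (ex_derive_continuous (K := R_AbsRing) (V := R_NormedModule)).
  now exists l.
Qed.

Lemma le_of_is_derive_le (g h dg dh : R -> R) (a b : R) : a <= b ->
  (forall x, a <= x <= b -> is_derive g x (dg x)) ->
  (forall x, a <= x <= b -> is_derive h x (dh x)) ->
  (forall x, a <= x <= b -> dg x <= dh x) ->
  g b - g a <= h b - h a.
Proof.
  intros Hab Hg Hh Hle.
  assert (Hd : forall x, a <= x <= b -> is_derive (fun y => h y - g y) x (dh x - dg x)).
  { intros x Hx. apply (is_derive_minus (K := R_AbsRing) (V := R_NormedModule)); auto. }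
  destruct (MVT_gen (fun y => h y - g y) a b (fun x => dh x - dg x)) as [c [Hc Hmvt]];
    rewrite ?Rmin_left, ?Rmax_right in * by lra.
  - intros x Hx. apply Hd. lra.
  - intros x Hx. apply continuity_pt_filterlim, (continuous_of_derive _ _ _ (Hd x Hx)).
  - assert (0 <= (dh c - dg c) * (b - a)) by (apply Rmult_le_pos; [pose proof (Hle c Hc) |]; lra).
    lra.
Qed.

Lemma Rabs_sub_le_of_derive_bound (f df : R -> R) (L x y : R) :
  (forall z, Rmin x y <= z <= Rmax x y -> is_derive f z (df z)) ->
  (forall z, Rmin x y <= z <= Rmax x y -> Rabs (df z) <= L) ->
  Rabs (f y - f x) <= L * Rabs (y - x).
Proof.
  intros Hd Hb.
  destruct (MVT_gen f x y df) as [c [Hc ->]].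
  - intros z Hz. apply Hd. lra.
  - intros z Hz. apply continuity_pt_filterlim, (continuous_of_derive _ _ _ (Hd z Hz)).
  - rewrite Rabs_mult. apply Rmult_le_compat_r; [apply Rabs_pos | auto].
Qed.

Lemma continuous_of_lipschitz_at (f : R -> R) (x K : R) :
  (forall y, Rabs (f y - f x) <= K * Rabs (y - x)) -> continuous f x.
Proof.
  intros Hf. apply continuity_pt_filterlim, continuity_pt_locally. intros eps.
  assert (HK : 0 < Rabs K + 1) by (pose proof (Rabs_pos K); lra).
  exists (mkposreal _ (Rdiv_lt_0_compat _ _ (cond_pos eps) HK)).
  intros y Hy. change (Rabs (y - x) < eps / (Rabs K + 1)) in Hy.
  apply Rle_lt_trans with (Rabs K * Rabs (y - x)).
  - eapply Rle_trans; [apply Hf |]. apply Rmult_le_compat_r; [apply Rabs_pos | apply Rle_abs].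
  - apply Rle_lt_trans with ((Rabs K + 1) * Rabs (y - x)).
    + pose proof (Rabs_pos (y - x)). nra.
    + apply Rmult_lt_reg_r with (/ (Rabs K + 1)); [apply Rinv_0_lt_compat; lra |].
      field_simplify; lra.
Qed.

Lemma is_derive_RInt_0 (f : R -> R) (x : R) :
  (forall s, continuous f s) -> is_derive (fun y => RInt f 0 y) x (f x).
Proof.
  intros Hf. auto_derive; [split; [| split] | ring]; auto.
  - apply (ex_RInt_continuous (V := R_CompleteNormedModule)). auto.
  - apply filter_forall. intros y. apply continuity_pt_filterlim, Hf.
Qed.

Lemma RInt_0_0 (f : R -> R) : RInt f 0 0 = 0.
Proof. exact (RInt_point (V := R_CompleteNormedModule) 0 f). Qed.

Lemma Rabs_RInt_le_exp (f : R -> R) (B mu t : R) : 0 < mu -> 0 <= t ->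
  (forall s, continuous f s) ->
  (forall s, 0 <= s <= t -> Rabs (f s) <= B * exp (mu * s)) ->
  Rabs (RInt f 0 t) <= B / mu * exp (mu * t).
Proof.
  intros Hmu Ht Hf Hb.
  assert (HB : 0 <= B).
  { pose proof (Hb 0 (conj (Rle_refl 0) Ht)) as Hb0. rewrite Rmult_0_r, exp_0 in Hb0.
    pose proof (Rabs_pos (f 0)). lra. }
  set (h := fun y => B / mu * exp (mu * y)).
  assert (Hh : forall x, 0 <= x <= t -> is_derive h x (B * exp (mu * x))).
  { intros x _. unfold h. auto_derive; [auto | field; lra]. }
  assert (Hh0 : h 0 = B / mu) by (unfold h; rewrite Rmult_0_r, exp_0; ring).
  assert (Hpos : 0 <= B / mu) by (apply Rdiv_le_0_compat; lra).
  assert (Hup : RInt f 0 t - RInt f 0 0 <= h t - h 0).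
  { apply (le_of_is_derive_le _ _ f (fun x => B * exp (mu * x))); auto.
    - intros x _. apply is_derive_RInt_0, Hf.
    - intros s Hs. pose proof (Hb s Hs) as Hs'. apply Rabs_le_between in Hs'. lra. }
  assert (Hlow : - RInt f 0 t - - RInt f 0 0 <= h t - h 0).
  { apply (le_of_is_derive_le (fun y => - RInt f 0 y) _ (fun x => - f x)
             (fun x => B * exp (mu * x))); auto.
    - intros x _.
      apply (is_derive_opp (K := R_AbsRing) (V := R_NormedModule)), is_derive_RInt_0, Hf.
    - intros s Hs. pose proof (Hb s Hs) as Hs'. apply Rabs_le_between in Hs'. lra. }
  rewrite RInt_0_0 in *. unfold h in *.
  apply Rabs_le. lra.
Qed.

Lemma le_of_le_add_geom (x y K : R) : (forall n, x <= y + K * (/ 2) ^ n) -> x <= y.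
Proof.
  intros H.
  assert (Hlim : is_lim_seq (fun n => y + K * (/ 2) ^ n) (y + K * 0)).
  { apply (is_lim_seq_plus' _ _ y (K * 0)); [apply is_lim_seq_const |].
    apply (is_lim_seq_scal_l _ K 0), is_lim_seq_geom. rewrite Rabs_pos_eq; lra. }
  rewrite Rmult_0_r, Rplus_0_r in Hlim.
  apply (is_lim_seq_le (fun _ => x) _ x y H); [apply is_lim_seq_const | exact Hlim].
Qed.

Section GeometricCauchy.

Variables (x : nat -> R) (K : R).
Hypothesis x_step : forall n, Rabs (x (S n) - x n) <= K * (/ 2) ^ n.

Lemma geom_tail_bound (n m : nat) : (n <= m)%nat -> Rabs (x m - x n) <= 2 * K * (/ 2) ^ n.
Proof.
  intros Hnm. replace m with (m - n + n)%nat by lia.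
  enough (forall p, Rabs (x (p + n)%nat - x n) <= 2 * K * (/ 2) ^ n - 2 * K * (/ 2) ^ (p + n))
    as Hp.
  { specialize (Hp (m - n)%nat). assert (0 <= K * (/ 2) ^ (m - n + n)).
    { eapply Rle_trans; [apply Rabs_pos | apply x_step]. }
    lra. }
  induction p as [| p IH].
  - unfold Rminus. rewrite Rplus_opp_r, Rabs_R0. simpl. lra.
  - rewrite Nat.add_succ_l.
    replace (x (S (p + n)) - x n) with ((x (S (p + n)) - x (p + n)%nat) + (x (p + n)%nat - x n))
      by ring.
    eapply Rle_trans; [apply Rabs_triang |].
    pose proof (x_step (p + n)). simpl. lra.
Qed.

Lemma geom_cauchy_lim :
  exists l, is_lim_seq x l /\ forall n, Rabs (l - x n) <= 2 * K * (/ 2) ^ n.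
Proof.
  assert (HK : 0 <= K).
  { pose proof (x_step 0). pose proof (Rabs_pos (x 1%nat - x 0%nat)). simpl in *. lra. }
  assert (Hcv : ex_finite_lim_seq x).
  { apply ex_lim_seq_cauchy_corr. intros eps.
    destruct (pow_lt_1_zero (/ 2)) with (y := eps / (4 * K + 1)) as [N HN].
    { rewrite Rabs_pos_eq; lra. }
    { apply Rdiv_lt_0_compat; [apply cond_pos | lra]. }
    exists N. intros n m Hn Hm.
    specialize (HN N (le_n N)). rewrite Rabs_pos_eq in HN by (apply pow_le; lra).
    assert ((4 * K + 1) * (/ 2) ^ N < eps).
    { apply Rmult_lt_compat_l with (r := 4 * K + 1) in HN; [| lra].
      field_simplify in HN; lra. }
    pose proof (geom_tail_bound N n Hn). pose proof (geom_tail_bound N m Hm).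
    pose proof (pow_le (/ 2) N).
    replace (x n - x m) with ((x n - x N) - (x m - x N)) by ring.
    eapply Rle_lt_trans; [apply Rabs_triang |]. rewrite Rabs_Ropp. nra. }
  destruct Hcv as [l Hl]. exists l. split; [exact Hl |]. intros n.
  change (Rbar_le (Rabs (l - x n)) (2 * K * (/ 2) ^ n)).
  apply (is_lim_seq_le_loc (fun m => Rabs (x m - x n)) (fun _ => 2 * K * (/ 2) ^ n)).
  - exists n. apply geom_tail_bound.
  - apply (is_lim_seq_abs _ (l - x n)), (is_lim_seq_minus' _ _ l (x n)); auto.
    apply is_lim_seq_const.
  - apply is_lim_seq_const.
Qed.

End GeometricCauchy.

Definition time_lipschitz (w : R -> Z -> R) (K : R) : Prop :=
  forall s s' j, Rabs (w s j - w s' j) <= K * Rabs (s - s').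

Lemma time_lipschitz_cont_linf (u : R -> Z -> R) (K t0 : R) :
  time_lipschitz u K -> cont_linf_at u t0.
Proof.
  intros Hu eps Heps.
  assert (HK : 0 <= Rabs K) by apply Rabs_pos.
  exists (eps / (Rabs K + 1)). split; [apply Rdiv_lt_0_compat; lra |].
  intros t _ Ht k.
  eapply Rle_trans; [apply Hu |].
  assert (Hd : (Rabs K + 1) * Rabs (t - t0) <= eps).
  { apply Rmult_lt_compat_l with (r := Rabs K + 1) in Ht; [| lra].
    field_simplify in Ht; lra. }
  pose proof (Rle_abs K). pose proof (Rabs_pos (t - t0)). nra.
Qed.

Section ShiftedLaplacian.

Variables (F : R -> R) (M : R).
Hypothesis F_mono_lipschitz : forall x y, x <= y -> 0 <= F y - F x <= M * (y - x).

Lemma F_lipschitz (x y : R) : Rabs (F x - F y) <= M * Rabs (x - y).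
Proof.
  destruct (Rle_dec x y) as [Hxy | Hxy].
  - pose proof (F_mono_lipschitz x y Hxy).
    rewrite Rabs_minus_sym, (Rabs_minus_sym x), !Rabs_pos_eq; lra.
  - pose proof (F_mono_lipschitz y x ltac:(lra)). rewrite !Rabs_pos_eq; lra.
Qed.

Lemma dlap_F_lipschitz (w w' : Z -> R) (k : Z) (A : R) :
  (forall j, Rabs (w j - w' j) <= A) ->
  Rabs (dlap (fun j => F (w j)) k - dlap (fun j => F (w' j)) k) <= 4 * M * A.
Proof.
  intros Hw. unfold dlap.
  assert (HM : 0 <= M) by (pose proof (F_mono_lipschitz 0 1); lra).
  assert (HF : forall j, Rabs (F (w j) - F (w' j)) <= M * A).
  { intros j. eapply Rle_trans; [apply F_lipschitz | apply Rmult_le_compat_l; auto]. }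
  pose proof (HF (k - 1)%Z). pose proof (HF k). pose proof (HF (k + 1)%Z).
  replace (F (w (k - 1)%Z) - 2 * F (w k) + F (w (k + 1)%Z)
           - (F (w' (k - 1)%Z) - 2 * F (w' k) + F (w' (k + 1)%Z)))
    with ((F (w (k - 1)%Z) - F (w' (k - 1)%Z)) - 2 * (F (w k) - F (w' k))
          + (F (w (k + 1)%Z) - F (w' (k + 1)%Z))) by ring.
  eapply Rle_trans; [apply Rabs_triang |].
  eapply Rle_trans; [apply Rplus_le_compat_r, Rabs_triang |].
  rewrite Rabs_Ropp, Rabs_mult, (Rabs_pos_eq 2) by lra. lra.
Qed.

Definition shifted_lap (w : Z -> R) (k : Z) : R :=
  dlap (fun j => F (w j)) k + 2 * M * w k.

Lemma shifted_lap_mono (w w' : Z -> R) (k : Z) :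
  (forall j, w j <= w' j) -> shifted_lap w k <= shifted_lap w' k.
Proof.
  intros Hw. unfold shifted_lap, dlap.
  pose proof (F_mono_lipschitz _ _ (Hw (k - 1)%Z)).
  pose proof (F_mono_lipschitz _ _ (Hw k)).
  pose proof (F_mono_lipschitz _ _ (Hw (k + 1)%Z)).
  lra.
Qed.

Lemma shifted_lap_const (c : R) (k : Z) : shifted_lap (fun _ => c) k = 2 * M * c.
Proof. unfold shifted_lap, dlap. ring. Qed.

Lemma shifted_lap_bounds (w : Z -> R) (k : Z) (a b : R) :
  (forall j, a <= w j <= b) -> 2 * M * a <= shifted_lap w k <= 2 * M * b.
Proof.
  intros Hw. rewrite <- (shifted_lap_const a k), <- (shifted_lap_const b k).
  split; apply shifted_lap_mono; intros j; apply Hw.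
Qed.

Lemma shifted_lap_lipschitz (w w' : Z -> R) (k : Z) (A : R) :
  (forall j, Rabs (w j - w' j) <= A) -> Rabs (shifted_lap w k - shifted_lap w' k) <= 6 * M * A.
Proof.
  intros Hw. unfold shifted_lap.
  assert (HM : 0 <= M) by (pose proof (F_mono_lipschitz 0 1); lra).
  pose proof (dlap_F_lipschitz w w' k A Hw).
  replace (dlap (fun j => F (w j)) k + 2 * M * w k - (dlap (fun j => F (w' j)) k + 2 * M * w' k))
    with ((dlap (fun j => F (w j)) k - dlap (fun j => F (w' j)) k) + 2 * M * (w k - w' k)) by ring.
  eapply Rle_trans; [apply Rabs_triang |].
  rewrite Rabs_mult, (Rabs_pos_eq (2 * M)) by lra.
  pose proof (Hw k). nra.
Qed.

Lemma shifted_lap_continuous (w : R -> Z -> R) (K : R) (k : Z) (t : R) :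
  time_lipschitz w K -> continuous (fun s => shifted_lap (w s) k) t.
Proof.
  intros Hw. apply continuous_of_lipschitz_at with (K := 6 * M * K). intros s.
  rewrite Rmult_assoc. apply shifted_lap_lipschitz. intros j. apply Hw.
Qed.

Lemma dlap_F_continuous (w : R -> Z -> R) (K : R) (k : Z) (t : R) :
  time_lipschitz w K -> continuous (fun s => dlap (fun j => F (w s j)) k) t.
Proof.
  intros Hw. apply continuous_of_lipschitz_at with (K := 4 * M * K). intros s.
  rewrite Rmult_assoc. apply dlap_F_lipschitz. intros j. apply Hw.
Qed.

End ShiftedLaplacian.

Lemma Rmax_0_lipschitz (t s : R) : Rabs (Rmax 0 t - Rmax 0 s) <= Rabs (t - s).
Proof.
  unfold Rmax. destruct (Rle_dec 0 t), (Rle_dec 0 s); unfold Rabs;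
    repeat destruct (Rcase_abs _); lra.
Qed.

Section Duhamel.

Variables (F : R -> R) (M : R).
Hypothesis F_mono_lipschitz : forall x y, x <= y -> 0 <= F y - F x <= M * (y - x).
Hypothesis M_pos : 0 < M.
Variables (a b : R) (u0 : Z -> R).
Hypothesis u0_bounds : forall k, a <= u0 k <= b.

Definition duhamel_integrand (w : R -> Z -> R) (k : Z) (s : R) : R :=
  exp (2 * M * s) * shifted_lap F M (w s) k.

Definition duhamel (w : R -> Z -> R) (k : Z) (t : R) : R :=
  exp (- (2 * M * t)) * (u0 k + RInt (duhamel_integrand w k) 0 t).

Lemma duhamel_integrand_continuous (w : R -> Z -> R) (K : R) (k : Z) (s : R) :
  time_lipschitz w K -> continuous (duhamel_integrand w k) s.
Proof.
  intros Hw.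
  apply (continuous_mult (U := R_UniformSpace) (K := R_AbsRing) (fun x => exp (2 * M * x))).
  - apply (continuous_of_derive _ _ (2 * M * exp (2 * M * s))). auto_derive; auto; ring.
  - eapply shifted_lap_continuous; eauto.
Qed.

Lemma is_derive_duhamel (w : R -> Z -> R) (K : R) (k : Z) (t : R) :
  time_lipschitz w K ->
  is_derive (duhamel w k) t (- (2 * M) * duhamel w k t + shifted_lap F M (w t) k).
Proof.
  intros Hw. unfold duhamel. auto_derive.
  - split; [| split; [| exact I]].
    + apply (ex_RInt_continuous (V := R_CompleteNormedModule)).
      intros; eapply duhamel_integrand_continuous; eauto.
    + apply filter_forall. intros y. apply continuity_pt_filterlim.
      eapply duhamel_integrand_continuous; eauto.
  - unfold duhamel_integrand. rewrite exp_Ropp. field. apply Rgt_not_eq, exp_pos.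
Qed.

Lemma duhamel_bounds (w : R -> Z -> R) (K : R) (k : Z) (t : R) :
  time_lipschitz w K -> (forall s j, a <= w s j <= b) -> 0 <= t ->
  a <= duhamel w k t <= b.
Proof.
  intros Hw Hwb Ht.
  set (I := fun y => RInt (duhamel_integrand w k) 0 y).
  assert (HI : forall x, 0 <= x <= t -> is_derive I x (duhamel_integrand w k x)).
  { intros x _. apply is_derive_RInt_0. intros; eapply duhamel_integrand_continuous; eauto. }
  assert (Hexp : forall c x, 0 <= x <= t ->
            is_derive (fun y => c * exp (2 * M * y)) x (2 * M * c * exp (2 * M * x))).
  { intros c x _. auto_derive; auto; ring. }
  assert (Hint : forall x, 2 * M * a * exp (2 * M * x) <= duhamel_integrand w k x
                           <= 2 * M * b * exp (2 * M * x)).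
  { intros x. unfold duhamel_integrand. pose proof (exp_pos (2 * M * x)).
    pose proof (shifted_lap_bounds F M F_mono_lipschitz (w x) k a b (Hwb x)). nra. }
  assert (Hlow : a * exp (2 * M * t) - a * exp (2 * M * 0) <= I t - I 0).
  { apply (le_of_is_derive_le _ _ _ _ 0 t Ht (Hexp a) HI). intros x _. apply Hint. }
  assert (Hup : I t - I 0 <= b * exp (2 * M * t) - b * exp (2 * M * 0)).
  { apply (le_of_is_derive_le _ _ _ _ 0 t Ht HI (Hexp b)). intros x _. apply Hint. }
  unfold I in *. rewrite RInt_0_0, Rmult_0_r, exp_0 in *.
  unfold duhamel. rewrite exp_Ropp. pose proof (exp_pos (2 * M * t)). pose proof (u0_bounds k).
  split.
  - apply Rmult_le_reg_l with (exp (2 * M * t)); auto. field_simplify; lra.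
  - apply Rmult_le_reg_l with (exp (2 * M * t)); auto. field_simplify; lra.
Qed.

Lemma duhamel_time_lipschitz (w : R -> Z -> R) (K : R) (k : Z) (t s : R) :
  time_lipschitz w K -> (forall s j, a <= w s j <= b) ->
  Rabs (duhamel w k (Rmax 0 t) - duhamel w k (Rmax 0 s)) <= 2 * M * (b - a) * Rabs (t - s).
Proof.
  intros Hw Hwb.
  eapply Rle_trans; [apply (Rabs_sub_le_of_derive_bound _
    (fun x => - (2 * M) * duhamel w k x + shifted_lap F M (w x) k) (2 * M * (b - a))) |].
  - intros x _. eapply is_derive_duhamel; eauto.
  - intros x Hx.
    assert (Hx0 : 0 <= x).
    { eapply Rle_trans; [| apply Hx]. apply Rmin_glb; apply Rmax_l. }
    destruct (duhamel_bounds w K k x Hw Hwb Hx0).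
    pose proof (shifted_lap_bounds F M F_mono_lipschitz (w x) k a b (Hwb x)).
    apply Rabs_le. split; nra.
  - apply Rmult_le_compat_l; [| apply Rmax_0_lipschitz].
    pose proof (u0_bounds 0%Z). nra.
Qed.

(* The weight [exp (10 M t)] turns the [6 M]-Lipschitz bound on [shifted_lap]
   into the contraction factor [6 M / (2 M + 10 M) = 1/2]. *)
Lemma duhamel_contraction (w1 w2 : R -> Z -> R) (K1 K2 D : R) (k : Z) (t : R) :
  time_lipschitz w1 K1 -> time_lipschitz w2 K2 ->
  (forall s j, 0 <= s -> Rabs (w1 s j - w2 s j) <= D * exp (10 * M * s)) -> 0 <= t ->
  Rabs (duhamel w1 k t - duhamel w2 k t) <= D / 2 * exp (10 * M * t).
Proof.
  intros Hw1 Hw2 HD Ht.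
  assert (Hc1 := fun s => duhamel_integrand_continuous w1 K1 k s Hw1).
  assert (Hc2 := fun s => duhamel_integrand_continuous w2 K2 k s Hw2).
  assert (Hdiff : duhamel w1 k t - duhamel w2 k t = exp (- (2 * M * t)) *
            RInt (fun s => duhamel_integrand w1 k s - duhamel_integrand w2 k s) 0 t).
  { unfold duhamel.
    rewrite (RInt_minus (V := R_CompleteNormedModule)); unfold minus, plus, opp; simpl; [ring | |];
      apply (ex_RInt_continuous (V := R_CompleteNormedModule)); auto. }
  assert (Hint : Rabs (RInt (fun s => duhamel_integrand w1 k s - duhamel_integrand w2 k s) 0 t)
                 <= 6 * M * D / (12 * M) * exp (12 * M * t)).
  { apply Rabs_RInt_le_exp; [lra | exact Ht | |].
    - intros s. apply (continuous_minus (U := R_UniformSpace) (V := R_NormedModule)); auto.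
    - intros s Hs. unfold duhamel_integrand.
      rewrite <- Rmult_minus_distr_l, Rabs_mult, Rabs_pos_eq by (apply Rlt_le, exp_pos).
      replace (12 * M * s) with (2 * M * s + 10 * M * s) by ring. rewrite exp_plus.
      pose proof (exp_pos (2 * M * s)).
      assert (Rabs (shifted_lap F M (w1 s) k - shifted_lap F M (w2 s) k)
              <= 6 * M * (D * exp (10 * M * s))).
      { apply shifted_lap_lipschitz; auto. intros j. apply HD. lra. }
      nra. }
  rewrite Hdiff, Rabs_mult, Rabs_pos_eq by (apply Rlt_le, exp_pos).
  replace (D / 2 * exp (10 * M * t))
    with (exp (- (2 * M * t)) * (6 * M * D / (12 * M) * exp (12 * M * t))).
  - apply Rmult_le_compat_l; [apply Rlt_le, exp_pos | exact Hint].
  - replace (12 * M * t) with (2 * M * t + 10 * M * t) by ring.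
    rewrite exp_plus, exp_Ropp. field. split; [lra | apply Rgt_not_eq, exp_pos].
Qed.

(* Iterates are frozen at their initial value for negative times, which makes
   them time-Lipschitz on the whole real line. *)
Fixpoint picard (n : nat) : R -> Z -> R :=
  match n with
  | O => fun _ => u0
  | S n => fun t k => duhamel (picard n) k (Rmax 0 t)
  end.

Lemma picard_bounds_lipschitz (n : nat) :
  (forall t k, a <= picard n t k <= b) /\ time_lipschitz (picard n) (2 * M * (b - a)).
Proof.
  assert (Hab : a <= b) by (pose proof (u0_bounds 0%Z); lra).
  induction n as [| n [IHb IHl]]; split; simpl.
  - auto.
  - intros s s' j. unfold Rminus at 1. rewrite Rplus_opp_r, Rabs_R0.
    apply Rmult_le_pos; [nra | apply Rabs_pos].
  - intros t k. eapply duhamel_bounds; eauto. apply Rmax_l.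
  - intros s s' j. eapply duhamel_time_lipschitz; eauto.
Qed.

Lemma picard_step (n : nat) (t : R) (k : Z) : 0 <= t ->
  Rabs (picard (S n) t k - picard n t k) <= (b - a) * (/ 2) ^ n * exp (10 * M * t).
Proof.
  revert t k. induction n as [| n IH]; intros t k Ht.
  - destruct (picard_bounds_lipschitz 1) as [Hb1 _]. pose proof (Hb1 t k).
    pose proof (u0_bounds k).
    pose proof (exp_ineq1_le (10 * M * t)).
    assert (0 <= 10 * M * t) by nra.
    simpl in *. apply Rabs_le. split; nra.
  - change (Rabs (duhamel (picard (S n)) k (Rmax 0 t) - duhamel (picard n) k (Rmax 0 t))
            <= (b - a) * (/ 2) ^ S n * exp (10 * M * t)).
    rewrite Rmax_right by exact Ht.
    eapply Rle_trans; [eapply duhamel_contraction; eauto; apply picard_bounds_lipschitz |].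
    right. simpl. field.
Qed.

Definition picard_lim (t : R) (k : Z) : R := real (Lim_seq (fun n => picard n t k)).

Lemma picard_lim_approx (n : nat) (t : R) (k : Z) : 0 <= t ->
  Rabs (picard_lim t k - picard n t k) <= 2 * ((b - a) * exp (10 * M * t)) * (/ 2) ^ n.
Proof.
  intros Ht.
  destruct (geom_cauchy_lim (fun n => picard n t k) ((b - a) * exp (10 * M * t))) as [l [Hl Hb]].
  - intros m. eapply Rle_trans; [apply picard_step, Ht | right; ring].
  - unfold picard_lim. rewrite (is_lim_seq_unique _ _ Hl). apply Hb.
Qed.

Lemma picard_Rmax (n : nat) (t : R) (k : Z) : picard n t k = picard n (Rmax 0 t) k.
Proof.
  destruct n; simpl; [reflexivity |]. rewrite (Rmax_right 0 (Rmax 0 t)); auto using Rmax_l.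
Qed.

Lemma picard_lim_Rmax (t : R) (k : Z) : picard_lim t k = picard_lim (Rmax 0 t) k.
Proof. unfold picard_lim. f_equal. apply Lim_seq_ext. intros n. apply picard_Rmax. Qed.

Lemma picard_lim_0 : picard_lim 0 = u0.
Proof.
  apply functional_extensionality. intros k. unfold picard_lim.
  rewrite (Lim_seq_ext _ (fun _ => u0 k)), Lim_seq_const; [reflexivity |].
  intros [| n]; simpl; [reflexivity |].
  unfold duhamel. rewrite Rmax_left, RInt_0_0, Rmult_0_r, Ropp_0, exp_0 by lra. ring.
Qed.

Lemma picard_lim_bounds (t : R) (k : Z) : a <= picard_lim t k <= b.
Proof.
  rewrite picard_lim_Rmax. set (t' := Rmax 0 t). assert (Ht' : 0 <= t') by apply Rmax_l.
  split; apply (le_of_le_add_geom _ _ (2 * ((b - a) * exp (10 * M * t')))); intros n;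
    pose proof (picard_lim_approx n t' k Ht') as Happrox; apply Rabs_le_between' in Happrox;
    destruct (picard_bounds_lipschitz n) as [Hb _]; pose proof (Hb t' k); lra.
Qed.

Lemma picard_lim_time_lipschitz : time_lipschitz picard_lim (2 * M * (b - a)).
Proof.
  intros s s' j. rewrite (picard_lim_Rmax s), (picard_lim_Rmax s').
  eapply Rle_trans; [| apply Rmult_le_compat_l; [| apply Rmax_0_lipschitz]].
  2: { pose proof (u0_bounds 0%Z). nra. }
  set (t1 := Rmax 0 s). set (t2 := Rmax 0 s').
  assert (H1 : 0 <= t1) by apply Rmax_l. assert (H2 : 0 <= t2) by apply Rmax_l.
  apply (le_of_le_add_geom _ _
           (2 * ((b - a) * exp (10 * M * t1)) + 2 * ((b - a) * exp (10 * M * t2)))).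
  intros n.
  pose proof (picard_lim_approx n t1 j H1). pose proof (picard_lim_approx n t2 j H2).
  destruct (picard_bounds_lipschitz n) as [_ Hl]. pose proof (Hl t1 t2 j).
  replace (picard_lim t1 j - picard_lim t2 j) with ((picard_lim t1 j - picard n t1 j)
    + (picard n t1 j - picard n t2 j) - (picard_lim t2 j - picard n t2 j)) by ring.
  eapply Rle_trans; [apply Rabs_triang |]. rewrite Rabs_Ropp.
  eapply Rle_trans; [apply Rplus_le_compat_r, Rabs_triang |]. lra.
Qed.

Lemma picard_lim_fixed (t : R) (k : Z) : 0 <= t -> picard_lim t k = duhamel picard_lim k t.
Proof.
  intros Ht. set (E := (b - a) * exp (10 * M * t)).
  enough (Rabs (picard_lim t k - duhamel picard_lim k t) <= 0) as Habs.
  { pose proof (Rabs_pos (picard_lim t k - duhamel picard_lim k t)).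
    apply Rminus_diag_uniq, Rabs_eq_0. lra. }
  apply (le_of_le_add_geom _ _ (2 * E)). intros n.
  pose proof (picard_lim_approx (S n) t k Ht) as Happrox.
  assert (Hstep : Rabs (duhamel (picard n) k t - duhamel picard_lim k t)
                  <= 2 * (b - a) * (/ 2) ^ n / 2 * exp (10 * M * t)).
  { eapply duhamel_contraction; try apply picard_bounds_lipschitz;
      auto using picard_lim_time_lipschitz.
    intros s j Hs. rewrite Rabs_minus_sym.
    eapply Rle_trans; [apply picard_lim_approx, Hs | right; ring]. }
  simpl picard in Happrox. rewrite Rmax_right in Happrox by exact Ht.
  replace (picard_lim t k - duhamel picard_lim k t)
    with ((picard_lim t k - duhamel (picard n) k t)
          + (duhamel (picard n) k t - duhamel picard_lim k t)) by ring.
  eapply Rle_trans; [apply Rabs_triang |].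
  replace (0 + 2 * E * (/ 2) ^ n)
    with (2 * E * (/ 2) ^ S n + 2 * (b - a) * (/ 2) ^ n / 2 * exp (10 * M * t))
    by (unfold E; simpl; field).
  unfold E. lra.
Qed.

Lemma is_derive_picard_lim (k : Z) (t : R) : 0 < t ->
  is_derive (fun s => picard_lim s k) t (dlap (fun j => F (picard_lim t j)) k).
Proof.
  intros Ht.
  apply (is_derive_ext_loc (K := R_AbsRing) (V := R_NormedModule) (duhamel picard_lim k)).
  - exists (mkposreal t Ht). intros s Hs. change (Rabs (s - t) < t) in Hs.
    apply Rabs_lt_between in Hs.
    symmetry. apply picard_lim_fixed. lra.
  - replace (dlap (fun j => F (picard_lim t j)) k)
      with (- (2 * M) * duhamel picard_lim k t + shifted_lap F M (picard_lim t) k).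
    + eapply is_derive_duhamel, picard_lim_time_lipschitz.
    + rewrite <- picard_lim_fixed by lra. unfold shifted_lap. ring.
Qed.

Lemma picard_lim_Derive_continuous (k : Z) (t : R) : 0 < t ->
  continuous (fun s => Derive (fun s' => picard_lim s' k) s) t.
Proof.
  intros Ht.
  apply (continuous_ext_loc (T := R_UniformSpace) (U := R_UniformSpace) _
           (fun s => dlap (fun j => F (picard_lim s j)) k)).
  - exists (mkposreal t Ht). intros s Hs. change (Rabs (s - t) < t) in Hs.
    apply Rabs_lt_between in Hs.
    symmetry. apply is_derive_unique, is_derive_picard_lim. lra.
  - eapply dlap_F_continuous, picard_lim_time_lipschitz; eauto.
Qed.

End Duhamel.

Lemma Rpower_le_base_nonpos (c z e : R) : 0 < c -> c <= z -> e <= 0 -> Rpower z e <= Rpower c e.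
Proof.
  intros Hc Hz He. rewrite <- (Ropp_involutive e), (Rpower_Ropp z), (Rpower_Ropp c).
  apply Rinv_le_contravar; [apply exp_pos | apply Rle_Rpower_l; lra].
Qed.

Lemma is_derive_G (beta z : R) : beta <> 0 -> 0 < z ->
  is_derive (G beta) z (Rabs beta * Rpower z (beta - 1)).
Proof.
  intros Hbeta Hz.
  assert (Hsign : beta / Rabs beta * beta = Rabs beta).
  { destruct (Rle_lt_dec 0 beta); [rewrite Rabs_pos_eq by lra | rewrite Rabs_left by lra];
      field; lra. }
  rewrite <- Hsign, Rmult_assoc. unfold G.
  apply is_derive_scal, is_derive_Reals, derivable_pt_lim_power, Hz.
Qed.

Lemma G_mono_lipschitz (beta c x y : R) : beta <> 0 -> beta <= 1 -> 0 < c -> c <= x -> x <= y ->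
  0 <= G beta y - G beta x <= Rabs beta * Rpower c (beta - 1) * (y - x).
Proof.
  intros Hbeta Hbeta1 Hc Hcx Hxy.
  assert (HG : forall z, x <= z <= y -> is_derive (G beta) z (Rabs beta * Rpower z (beta - 1)))
    by (intros z Hz; apply is_derive_G; lra).
  assert (Habs : 0 < Rabs beta) by (apply Rabs_pos_lt, Hbeta).
  split.
  - enough (0 - 0 <= G beta y - G beta x) by lra.
    assert (H0 : forall z, x <= z <= y -> is_derive (fun _ => 0) z 0)
      by (intros; apply (is_derive_const (K := R_AbsRing) (V := R_NormedModule))).
    apply (le_of_is_derive_le _ _ (fun _ => 0) _ x y Hxy H0 HG).
    intros z _. apply Rlt_le, Rmult_lt_0_compat; [exact Habs | apply exp_pos].
  - set (L := Rabs beta * Rpower c (beta - 1)).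
    enough (G beta y - G beta x <= L * y - L * x) by lra.
    apply (le_of_is_derive_le _ (fun z => L * z) _ (fun _ => L) x y Hxy HG).
    + intros z _. auto_derive; auto; ring.
    + intros z Hz. apply Rmult_le_compat_l; [lra |].
      apply Rpower_le_base_nonpos; lra.
Qed.

Definition clamp (lo hi x : R) : R := Rmax lo (Rmin hi x).

Lemma clamp_mono_lipschitz (lo hi x y : R) : lo <= hi -> x <= y ->
  lo <= clamp lo hi x /\ clamp lo hi x <= clamp lo hi y /\ clamp lo hi y - clamp lo hi x <= y - x.
Proof. intros Hlh Hxy. unfold clamp, Rmax, Rmin. repeat destruct (Rle_dec _ _); lra. Qed.

Lemma clamp_id (lo hi x : R) : lo <= x <= hi -> clamp lo hi x = x.
Proof. intros Hx. unfold clamp. rewrite Rmin_right, Rmax_right; lra. Qed.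

Lemma G_clamp_mono_lipschitz (beta lo hi x y : R) :
  beta <> 0 -> beta <= 1 -> 0 < lo -> lo <= hi -> x <= y ->
  0 <= G beta (clamp lo hi y) - G beta (clamp lo hi x)
    <= Rabs beta * Rpower lo (beta - 1) * (y - x).
Proof.
  intros Hbeta Hbeta1 Hlo Hlh Hxy.
  destruct (clamp_mono_lipschitz lo hi x y Hlh Hxy) as [Hx [Hmono Hlip]].
  pose proof (G_mono_lipschitz beta lo _ _ Hbeta Hbeta1 Hlo Hx Hmono).
  assert (0 <= Rabs beta * Rpower lo (beta - 1))
    by (apply Rmult_le_pos; [apply Rabs_pos | apply Rlt_le, exp_pos]).
  nra.
Qed.

Theorem corollaryA5 (beta : R) (u0 : Z -> R) (delta C : R) :
  (beta < 0 \/ (0 < beta /\ beta <= 1)) ->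
  linf_plus u0 ->
  0 < delta ->
  (forall k, delta <= u0 k /\ u0 k <= C) ->
  exists u : R -> Z -> R,
    is_solution beta u0 u /\
    (forall t k, 0 <= t -> delta <= u t k /\ u t k <= C).
Proof.
  intros Hbeta _ Hdelta Hu0.
  assert (Hbeta0 : beta <> 0) by lra. assert (Hbeta1 : beta <= 1) by lra.
  assert (HdC : delta <= C) by (destruct (Hu0 0%Z); lra).
  set (F := fun x => G beta (clamp delta C x)).
  set (M := Rabs beta * Rpower delta (beta - 1)).
  assert (HM : 0 < M) by (apply Rmult_lt_0_compat; [apply Rabs_pos_lt, Hbeta0 | apply exp_pos]).
  assert (HF : forall x y, x <= y -> 0 <= F y - F x <= M * (y - x))
    by (intros x y Hxy; apply G_clamp_mono_lipschitz; auto).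
  set (u := picard_lim F M u0).
  assert (Hb : forall t k, delta <= u t k <= C) by (intros; eapply picard_lim_bounds; eauto).
  assert (HFu : forall t, (fun j => F (u t j)) = (fun j => G beta (u t j))).
  { intros t. apply functional_extensionality. intros j. unfold F. rewrite clamp_id; auto. }
  exists u. split; [split; [| split; [| split]] | intros t k _; apply Hb].
  - intros t _. split.
    + intros k. pose proof (Hb t k). lra.
    + exists C. intros k. pose proof (Hb t k). rewrite Rabs_pos_eq; lra.
  - intros t0 _. eapply time_lipschitz_cont_linf, picard_lim_time_lipschitz; eauto.
  - eapply picard_lim_0.
  - intros k t Ht. split; [pose proof (Hb t k); lra | split].
    + rewrite <- HFu. eapply is_derive_picard_lim; eauto.
    + eapply picard_lim_Derive_continuous; eauto.
Qed.
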